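(* For any finite alphabet $\mathfrak{G}$, the initial path series of $(\mathbf{S}_\bullet(\mathfrak{G}), \mathbf{U})$ satisfies $\langle t^d, \mathbf{I}_\mathbf{U}\rangle = \sum_{n\in[1+(m_\mathfrak{G}-1)d]} \theta(d,n)$ for any $d\geq 0$, where $\theta(d,n)$ satisfies the recurrence $\theta(d,n)=0$ for any $n\leq 0$ and $d\in\mathbb{Z}$, $\theta(0,1)=1$, and $\theta(d,n) = \sum_{\mathtt{a}\in\mathfrak{G},\, |\mathtt{a}|\leq n} (n+1-|\mathtt{a}|)\,\theta(d-1, n+1-|\mathtt{a}|)$ for any $d\geq 1$ and $n\geq 1$.
   Context: $\mathfrak{G}$ is a finite alphabet (letters with arities $\geq 1$), and $m_\mathfrak{G}$ is the maximal arity of a letter of $\mathfrak{G}$. A $\mathfrak{G}$-tree is either the leaf (the tree with no internal node) or a root decorated by a letter $\mathtt{a}\in\mathfrak{G}$ with $|\mathtt{a}|$ children that are $\mathfrak{G}$-trees; its degree is its number of internal nodes and its arity $|\mathfrak{t}|$ its number of leaves. $\mathbf{S}_\bullet(\mathfrak{G})$ is the set of $\mathfrak{G}$-trees graded by degree. $\mathbf{U}(\mathfrak{t}) = \sum_{\mathtt{a}\in\mathfrak{G},\, i\in[|\mathfrak{t}|]} \mathfrak{t}\circ_i\mathtt{a}$, where $\mathfrak{t}\circ_i\mathtt{a}$ replaces the $i$-th leaf of $\mathfrak{t}$ by an internal node decorated by $\mathtt{a}$ with only leaves as children; this graded graph has the leaf as root. The initial path series is $\mathbf{I}_\mathbf{U}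 = \sum_{\mathfrak{t}} \langle\mathfrak{t},\mathbf{H}_\mathbf{U}\rangle\, t^{\deg(\mathfrak{t})}$, where $\langle\mathfrak{t},\mathbf{H}_\mathbf{U}\rangle$ is the number of paths from the leaf to $\mathfrak{t}$ in this graph; so $\langle t^d,\mathbf{I}_\mathbf{U}\rangle$ is the number of paths of length $d$ starting at the leaf. (In the proof, $\theta(d,n)$ is the number of such paths ending at trees of degree $d$ and arity $n$.) *)

From mathcomp Require Import all_boot all_order.
Set Implicit Arguments. Unset Strict Implicit. Unset Printing Implicit Defensive.

Section Trees.
Variable G : finType.
Variable ar : G -> nat.

(* G-trees: the leaf, or a root labelled by a letter with a list of children.
   (Well-formedness, #children = arity, holds for all trees reachable from the
   leaf by grafting, which are the only ones involved below.) *)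
Inductive tree : Type :=
| Leaf : tree
| Node : G -> seq tree -> tree.

Fixpoint tdeg (t : tree) : nat :=
  match t with
  | Leaf => 0
  | Node _ ts => (sumn (map tdeg ts)).+1
  end.

Fixpoint tarity (t : tree) : nat :=
  match t with
  | Leaf => 1
  | Node _ ts => sumn (map tarity ts)
  end.

Definition corolla (a : G) : tree := Node a (nseq (ar a) Leaf).

(* Replace the (k+1)-th leaf (left-to-right) by the corolla of a.
   The counter is [Some k] while still searching, [None] once done. *)
Fixpoint ins (a : G) (k : option nat) (t : tree) : tree * option nat :=
  match t with
  | Leaf =>
      match k with
      | Some 0 => (corolla a, None)
      | Some k'.+1 => (Leaf, Some k')
      | None => (Leaf, None)
      end
  | Node b ts =>
      let fix go (k : option nat) (ts : seq tree) : seq tree * option nat :=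
        match ts with
        | [::] => ([::], k)
        | t1 :: ts1 =>
            let (t1', k1) := ins a k t1 in
            let (ts1', k2) := go k1 ts1 in
            (t1' :: ts1', k2)
        end in
      let (ts', k') := go k ts in (Node b ts', k')
  end.

(* t o_i a, for i in [1, |t|] (1-indexed leaves) *)
Definition graft (t : tree) (i : nat) (a : G) : tree := (ins a (Some i.-1) t).1.

(* U(t) = sum_{a in G, i in [|t|]} t o_i a, as a multiset (list) of trees *)
Definition U (t : tree) : seq tree :=
  [seq graft t i a | a <- enum G, i <- iota 1 (tarity t)].

(* U^d(leaf) as a multiset: each element corresponds to exactly one path of
   length d in the graph U starting at the leaf. *)
Definition Uiter (d : nat) : seq tree :=
  iter d (fun l => flatten (map U l)) [:: Leaf].

(* <t^d, I_U> : number of paths of length d starting at the leaf *)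
Definition initial_path_coef (d : nat) : nat := size (Uiter d).

Definition max_arity : nat := \max_(a : G) ar a.

Fixpoint theta (d n : nat) : nat :=
  match d with
  | 0 => (n == 1)
  | d'.+1 =>
      if n == 0 then 0
      else \sum_(a : G | ar a <= n) (n + 1 - ar a) * theta d' (n + 1 - ar a)
  end.

End Trees.

From mathcomp Require Import all_boot all_order zify.
From Stdlib Require List.

Set Implicit Arguments.
Unset Strict Implicit.
Unset Printing Implicit Defensive.

(* Grafting a corolla of arity k on any of the n leaves of a tree yields a tree
   with n + k - 1 leaves.  Hence the multiset of arities of the trees reached by
   paths of length d evolves on its own: a tree of arity m produces, for each
   letter a, m trees of arity m + |a| - 1.  Counting those of arity n gives the
   recurrence of theta; and since each step adds between 0 and m_G - 1 leaves,
   all arities after d steps lie in [1, 1 + (m_G - 1) d], so summing theta(d, n)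
   over that range counts every path. *)

Lemma size_count_mem_range (s : seq nat) lo hi :
  all (fun n => lo <= n < hi) s -> size s = \sum_(lo <= n < hi) count_mem n s.
Proof.
elim: s => [|x s IH] /=; first by rewrite big1.
move=> /andP [x_range /IH ->]; rewrite big_split /= -add1n; congr (_ + _).
rewrite (bigD1_seq x) ?mem_index_iota ?iota_uniq //= eqxx big1 // => n.
by rewrite eq_sym => /negbTE ->.
Qed.

Lemma graft_arity_weight m k n :
  0 < k -> m * (m + k - 1 == n) = (k <= n) * ((n + 1 - k) * (m == n + 1 - k)).
Proof. by move=> k_pos; case: leqP; case: eqP; case: eqP; lia. Qed.

Section Grafting.
Variables (G : finType) (ar : G -> nat).

Lemma tree_nested_ind (P : tree G -> Prop) :
  P (Leaf G) -> (forall b ts, List.Forall P ts -> P (Node b ts)) ->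
  forall t, P t.
Proof.
move=> PL PN; fix IH 1; case=> [|b ts]; first exact: PL.
apply: PN; elim: ts => [|t ts IHts]; constructor; [exact: IH | exact: IHts].
Qed.

Definition ins_seq (a : G) :=
  fix go (k : option nat) (ts : seq (tree G)) {struct ts} :=
  match ts with
  | [::] => ([::], k)
  | t1 :: ts1 =>
      let (t1', k1) := ins ar a k t1 in
      let (ts1', k2) := go k1 ts1 in
      (t1' :: ts1', k2)
  end.

Lemma ins_Node a k b ts :
  ins ar a k (Node b ts) = let (ts', k') := ins_seq a k ts in (Node b ts', k').
Proof. by []. Qed.

(* The counter [Some k] of [ins] means that k leaves remain to be skipped. *)
Definition skip_leaves (n : nat) (k : option nat) : option nat :=
  if k is Some k then (if k < n then None else Some (k - n)) else None.

Definition grafts_within (n : nat) (k : option nat) : bool :=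
  if k is Some k then k < n else false.

Lemma skip_leavesD n m k :
  skip_leaves m (skip_leaves n k) = skip_leaves (n + m) k.
Proof.
case: k => [k|] //=; case: ltnP => [lt_kn | le_nk] /=; first by rewrite ltn_addr.
by rewrite ltn_subLR // subnDA.
Qed.

Lemma grafts_withinD n m k :
  grafts_within n k + grafts_within m (skip_leaves n k) = grafts_within (n + m) k.
Proof.
case: k => [k|] //=; case: ltnP => [lt_kn | le_nk] /=; first by rewrite ltn_addr.
by rewrite ltn_subLR.
Qed.

(* A pass of [ins] over a forest turns n leaves into n' and the counter k into
   k'; stated without subtraction so that it also covers letters of arity 0. *)
Definition graft_effect (a : G) n k n' k' : Prop :=
  k' = skip_leaves n k /\
  n' + grafts_within n k = n + grafts_within n k * ar a.

Lemma graft_effectD a n k n1 k1 m m1 k2 :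
  graft_effect a n k n1 k1 -> graft_effect a m k1 m1 k2 ->
  graft_effect a (n + m) k (n1 + m1) k2.
Proof.
move=> [-> eff_n] [-> eff_m]; split; first exact: skip_leavesD.
rewrite -grafts_withinD mulnDl; lia.
Qed.

Lemma ins_seq_effect a k ts :
  List.Forall (fun t => forall k,
    graft_effect a (tarity t) k (tarity (ins ar a k t).1) (ins ar a k t).2) ts ->
  graft_effect a (sumn (map (@tarity G) ts)) k
    (sumn (map (@tarity G) (ins_seq a k ts).1)) (ins_seq a k ts).2.
Proof.
elim: ts k => [|t ts IH] k.
  by case: k => [k|] _; split; rewrite //= subn0.
move=> /List.Forall_cons_iff [eff_t eff_ts] /=.
move: (eff_t k); case: (ins ar a k t) => t' k1 eff1.
move: (IH k1 eff_ts); case: (ins_seq a k1 ts) => ts' k2 eff2.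
exact: graft_effectD eff1 eff2.
Qed.

Lemma ins_effect a k t :
  graft_effect a (tarity t) k (tarity (ins ar a k t).1) (ins ar a k t).2.
Proof.
elim/tree_nested_ind: t k => [|b ts eff_ts] k.
  case: k => [[|k]|]; split; rewrite //= ?subn1 //.
  by rewrite /corolla /= map_nseq sumn_nseq mul1n addn1.
rewrite ins_Node; move: (ins_seq_effect k eff_ts).
by case: (ins_seq a k ts).
Qed.

Lemma tarity_graft t i a :
  0 < i <= tarity t -> tarity (graft ar t i a) = tarity t + ar a - 1.
Proof.
move=> i_leaf; have [_] := ins_effect a (Some i.-1) t.
have -> : grafts_within (tarity t) (Some i.-1) by rewrite /=; lia.
rewrite /graft; lia.
Qed.

Definition graft_arities (n : nat) : seq nat :=
  [seq n + ar a - 1 | a <- enum G, i <- iota 1 n].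

Lemma map_tarity_U t : map (@tarity G) (U ar t) = graft_arities (tarity t).
Proof.
rewrite /U map_flatten -map_comp; congr flatten; apply: eq_map => a /=.
rewrite -map_comp; apply/eq_in_map => i; rewrite mem_iota => i_leaf /=.
apply: tarity_graft; lia.
Qed.

Lemma map_tarity_UiterS d :
  map (@tarity G) (Uiter ar d.+1) =
  flatten (map graft_arities (map (@tarity G) (Uiter ar d))).
Proof.
rewrite /Uiter iterS -/(Uiter ar d) map_flatten -map_comp -map_comp.
by congr flatten; apply: eq_map => t /=; rewrite map_tarity_U.
Qed.

Lemma count_mem_graft_arities m n :
  count_mem n (graft_arities m) = \sum_(a : G) m * (m + ar a - 1 == n).
Proof.
rewrite count_flatten sumnE !big_map [index_enum _]unlock.
apply: eq_bigr => a _ /=.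
rewrite mulnC -[X in _ * X](size_iota 1 m).
elim: (iota 1 m) => [|i s IH] /=; first by rewrite muln0.
by rewrite IH mulnS.
Qed.

End Grafting.

Section Counting.
Variables (G : finType) (ar : G -> nat).
Hypothesis ar_pos : forall a : G, 0 < ar a.

Lemma count_mem_flatten_graft_arities s n :
  count_mem n (flatten (map (graft_arities ar) s)) =
  \sum_(a : G) (ar a <= n) * ((n + 1 - ar a) * count_mem (n + 1 - ar a) s).
Proof.
rewrite count_flatten sumnE !big_map.
under eq_bigr do rewrite count_mem_graft_arities.
rewrite exchange_big; apply: eq_bigr => a _.
under eq_bigr do rewrite graft_arity_weight //.
rewrite -!big_distrr -sum1_count [in RHS]big_mkcond.
by congr (_ * (_ * _)); apply: eq_bigr => m _; case: eqP.
Qed.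

Lemma thetaS d n :
  theta ar d.+1 n =
  \sum_(a : G) (ar a <= n) * ((n + 1 - ar a) * theta ar d (n + 1 - ar a)).
Proof.
case: n => [|n] /=; first by rewrite big1 // => a _; rewrite leqNgt ar_pos.
by rewrite big_mkcond; apply: eq_bigr => a _; case: leqP; rewrite ?mul1n.
Qed.

Lemma count_mem_tarity_Uiter d n :
  count_mem n (map (@tarity G) (Uiter ar d)) = theta ar d n.
Proof.
elim: d n => [|d IH] n; first by rewrite /= addn0 eq_sym.
rewrite map_tarity_UiterS count_mem_flatten_graft_arities thetaS.
by apply: eq_bigr => a _; rewrite IH.
Qed.

Lemma mem_graft_arities m n :
  n \in graft_arities ar m -> m <= n < m + max_arity ar.
Proof.
case/allpairsP => -[a i] [_ _ /= ->].
have := ar_pos a; have : ar a <= max_arity ar := leq_bigmax a.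
lia.
Qed.

Lemma tarity_Uiter_range d :
  all (fun n => 1 <= n < (1 + (max_arity ar - 1) * d).+1)
    (map (@tarity G) (Uiter ar d)).
Proof.
elim: d => [|d IH]; first by [].
rewrite map_tarity_UiterS; apply/allP => n /flattenP [_ /mapP [m m_in ->]].
move=> /mem_graft_arities; have := allP IH m m_in.
rewrite mulnS; lia.
Qed.

End Counting.

Theorem proposition2p3 (G : finType) (ar : G -> nat)
  (ar_pos : forall a : G, 0 < ar a) (d : nat) :
  initial_path_coef ar d =
  \sum_(1 <= n < (1 + (max_arity ar - 1) * d).+1) theta ar d n.
Proof.
rewrite /initial_path_coef -(size_map (@tarity G)).
rewrite (size_count_mem_range (tarity_Uiter_range ar_pos d)).
by apply: eq_bigr => n _; rewrite count_mem_tarity_Uiter.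
Qed.
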